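(* Let $q,u$ be positive integers, let $B\in\Gamma^u_u$ be a unimodular binarization polytope and let $C\in\Gamma^q_u$. Then there exists an integral affine transformation $h:\mathbb{R}^{1+u}\to\mathbb{R}^{1+q}$ with $h(B)\subseteq C$.
   Context: For positive integers $q,u$, $\Gamma^q_u$ is the set of rational polytopes $B\subseteq\{(x,z)\in\mathbb{R}\times[0,1]^q:0\le x\le u\}$ with $\operatorname{proj}_x(B\cap(\mathbb{R}\times\{0,1\}^q))=\{0,1,\dots,u\}$. $B$ is perfect if for each $x\in\{0,\dots,u\}$ there is a unique $z\in\{0,1\}^q$ with $(x,z)\in B$, and $B=\mathrm{conv}(B\cap(\mathbb{R}\times\{0,1\}^q))$. A perfect $B\in\Gamma^u_u$, written $B=\mathrm{conv}\{(j,w^j):j=0,\dots,u\}$ with $w^j\in\{0,1\}^u$, is unimodular if the $u\times u$ matrix with columns $w^j-w^0$ ($j=1,\dots,u$) is integral with determinant $\pm1$. An integral affine transformation $\mathbb{R}^a\to\mathbb{R}^b$ is a map $y\mapsto Vy+v$ with $V$ an integral $b\times a$ matrix and $v\in\mathbb{Z}^b$. *)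

From mathcomp Require Import all_boot all_order all_algebra.
From mathcomp Require Import boolp classical_sets reals.
Set Implicit Arguments. Unset Strict Implicit. Unset Printing Implicit Defensive.
Import Order.TTheory GRing.Theory Num.Theory.
Local Open Scope ring_scope.
Local Open Scope classical_set_scope.

(* A point (x, z) of R x R^q is encoded as the row vector [x | z] : 'rV_(1+q). *)
Definition mkpt (R : realType) (q : nat) (x : R) (z : 'rV[R]_q) : 'rV[R]_(1 + q) :=
  row_mx (x%:M) z.
Definition xc (R : realType) (q : nat) (p : 'rV[R]_(1 + q)) : R := lsubmx p 0 0.
Definition zc (R : realType) (q : nat) (p : 'rV[R]_(1 + q)) : 'rV[R]_q := rsubmx p.

Definition is_rat (R : realType) (r : R) : Prop := exists a : rat, r = ratr a.
Definition is_intR (R : realType) (r : R) : Prop := exists a : int, r = a%:~R.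

Definition binary (R : realType) (q : nat) (z : 'rV[R]_q) : Prop :=
  forall i, z 0 i = 0 \/ z 0 i = 1.

Definition conv (R : realType) (n : nat) (S : set 'rV[R]_n) : set 'rV[R]_n :=
  [set p | exists (k : nat) (pts : 'I_k -> 'rV[R]_n) (l : 'I_k -> R),
      (forall i, S (pts i)) /\ (forall i, 0 <= l i) /\ \sum_(i < k) l i = 1 /\
      p = \sum_(i < k) l i *: pts i].

Definition rat_polytope (R : realType) (n : nat) (B : set 'rV[R]_n) : Prop :=
  exists (k : nat) (v : 'I_k -> 'rV[R]_n),
    (forall i j, is_rat (v i 0 j)) /\ B = conv (range v).

Definition binpts (R : realType) (q : nat) : set 'rV[R]_(1 + q) :=
  [set p | binary (zc p)].

Definition Gamma (R : realType) (q u : nat) (B : set 'rV[R]_(1 + q)) : Prop :=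
  rat_polytope B /\
  (forall p, B p -> (0 <= xc p <= u%:R) /\ (forall i, 0 <= zc p 0 i <= 1)) /\
  (forall x : R, (exists p, B p /\ binary (zc p) /\ xc p = x) <->
                 (exists j : nat, (j <= u)%N /\ x = j%:R)).

Definition perfect (R : realType) (q u : nat) (B : set 'rV[R]_(1 + q)) : Prop :=
  (forall j : nat, (j <= u)%N -> exists! z : 'rV[R]_q, binary z /\ B (mkpt j%:R z)) /\
  B = conv (B `&` @binpts R q).

Definition unimodular (R : realType) (u : nat) (B : set 'rV[R]_(1 + u)) : Prop :=
  @Gamma R u u B /\ @perfect R u u B /\
  exists w : 'I_u.+1 -> 'rV[R]_u,
    (forall j : 'I_u.+1, binary (w j) /\ B (mkpt (j : nat)%:R (w j))) /\
    B = conv (fun p => exists j : 'I_u.+1, p = mkpt (j : nat)%:R (w j)) /\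
    (forall i j, is_intR ((\matrix_(a < u, b < u) (w (lift ord0 b) 0 a - w ord0 0 a)) i j)) /\
    (\det (\matrix_(a < u, b < u) (w (lift ord0 b) 0 a - w ord0 0 a)) = 1 \/
     \det (\matrix_(a < u, b < u) (w (lift ord0 b) 0 a - w ord0 0 a)) = -1).

(* A unimodular B is the convex hull of the points (j, w^j), j = 0..u, and C contains, for
   every j, a point (j, z^j) with z^j binary.  Since the difference matrix W with rows
   w^j - w^0 is integral with determinant +-1, its inverse is integral, so
   M := W^-1 Z (Z with rows z^j - z^0) is an integral matrix with w^j M - w^0 M = z^j - z^0.
   The integral affine map (x, y) |-> (x, y M + z^0 - w^0 M) therefore sends each vertex
   (j, w^j) of B to (j, z^j) in C, and B into C because C is convex. *)

From mathcomp Require Import all_boot all_order all_algebra.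
From mathcomp Require Import boolp classical_sets reals.
Set Implicit Arguments. Unset Strict Implicit. Unset Printing Implicit Defensive.
Import Order.TTheory GRing.Theory Num.Theory.
Local Open Scope ring_scope.
Local Open Scope classical_set_scope.

Section MatrixOverSubring.
Variables (R : comUnitRingType) (S : subringClosed R).

Lemma det_mxOver n (A : 'M[R]_n) : A \is a mxOver S -> \det A \in S.
Proof.
move=> /mxOverP AS; apply: rpred_sum => s _.
by rewrite rpredM ?rpredX ?rpredN1 // rpred_prod.
Qed.

Lemma adj_mxOver n (A : 'M[R]_n) : A \is a mxOver S -> \adj A \is a mxOver S.
Proof.
move=> /mxOverP AS; apply/mxOverP => i j; rewrite mxE /cofactor.
rewrite rpredM ?rpredX ?rpredN1 // det_mxOver //.
by apply/mxOverP => a b; rewrite !mxE.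
Qed.

Lemma invmx_mxOver n (A : 'M[R]_n) :
  A \in unitmx -> (\det A)^-1 \in S -> A \is a mxOver S -> invmx A \is a mxOver S.
Proof. by move=> Au detVS AS; rewrite /invmx Au mxOverZ ?adj_mxOver. Qed.

Lemma row_mxOver m n1 n2 (A : 'M[R]_(m, n1)) (B : 'M[R]_(m, n2)) :
  A \is a mxOver S -> B \is a mxOver S -> row_mx A B \is a mxOver S.
Proof.
move=> /mxOverP AS /mxOverP BS; apply/mxOverP => i j.
by rewrite -[j]splitK; case: split => k; rewrite ?row_mxEl ?row_mxEr.
Qed.

Lemma col_mxOver m1 m2 n (A : 'M[R]_(m1, n)) (B : 'M[R]_(m2, n)) :
  A \is a mxOver S -> B \is a mxOver S -> col_mx A B \is a mxOver S.
Proof.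
move=> /mxOverP AS /mxOverP BS; apply/mxOverP => i j.
by rewrite -[i]splitK; case: split => k; rewrite ?col_mxEu ?col_mxEd.
Qed.

Lemma block_mxOver m1 m2 n1 n2 (Aul : 'M[R]_(m1, n1)) (Aur : 'M[R]_(m1, n2))
    (Adl : 'M[R]_(m2, n1)) (Adr : 'M[R]_(m2, n2)) :
  Aul \is a mxOver S -> Aur \is a mxOver S -> Adl \is a mxOver S ->
  Adr \is a mxOver S -> block_mx Aul Aur Adl Adr \is a mxOver S.
Proof. by move=> *; rewrite block_mxEv col_mxOver ?row_mxOver. Qed.

Definition diffmx k n (w : 'I_k.+1 -> 'rV[R]_n) : 'M[R]_(k, n) :=
  \matrix_(j < k, i < n) (w (lift ord0 j) 0 i - w ord0 0 i).

Lemma row_diffmx k n (w : 'I_k.+1 -> 'rV[R]_n) j :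
  row j (diffmx w) = w (lift ord0 j) - w ord0.
Proof. by apply/rowP => i; rewrite !mxE. Qed.

Lemma diffmx_mxOver k n (w : 'I_k.+1 -> 'rV[R]_n) :
  (forall j, w j \is a mxOver S) -> diffmx w \is a mxOver S.
Proof.
move=> wS; apply/mxOverP => j i; rewrite mxE.
by rewrite rpredB ?(mxOverP (wS _)).
Qed.

Lemma unimodular_affine_interpolation u q (w : 'I_u.+1 -> 'rV[R]_u)
    (z : 'I_u.+1 -> 'rV[R]_q) :
  (forall j, w j \is a mxOver S) -> (forall j, z j \is a mxOver S) ->
  \det (diffmx w) = 1 \/ \det (diffmx w) = -1 ->
  exists (M : 'M[R]_(u, q)) (c : 'rV[R]_q),
    [/\ M \is a mxOver S, c \is a mxOver S & forall j, w j *m M + c = z j].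
Proof.
move=> wS zS detW.
have Wu : diffmx w \in unitmx.
  by rewrite unitmxE; case: detW => ->; rewrite ?unitrN unitr1.
have detVS : (\det (diffmx w))^-1 \in S.
  by case: detW => ->; rewrite ?invrN invr1 ?rpredN rpred1.
pose M := invmx (diffmx w) *m diffmx z.
have MS : M \is a mxOver S.
  by rewrite mxOverM ?invmx_mxOver ?diffmx_mxOver.
exists M, (z ord0 - w ord0 *m M); split => [||j].
- exact: MS.
- by rewrite rpredB // mxOverM.
have shift : (w j - w ord0) *m M = z j - z ord0.
  case: (unliftP ord0 j) => [b ->|->]; last by rewrite !subrr mul0mx.
  by rewrite -!row_diffmx -row_mul mulKVmx.
by rewrite addrCA -mulmxBl shift addrC subrK.
Qed.

End MatrixOverSubring.

Section ConvexHull.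
Variables (R : realType) (n : nat).

Lemma conv_rangeP K (vv : 'I_K -> 'rV[R]_n) p : conv (range vv) p ->
  exists mu : 'I_K -> R, [/\ forall t, 0 <= mu t, \sum_t mu t = 1 &
    p = \sum_t mu t *: vv t].
Proof.
move=> [k [pts [l [hp [hl [hs ->]]]]]].
have /choice[tt htt] : forall s, exists t, vv t = pts s.
  by move=> s; case: (hp s) => t _ e; exists t.
exists (fun t => \sum_(s | tt s == t) l s); split.
- by move=> t; apply: sumr_ge0.
- by rewrite -hs (partition_big tt xpredT).
rewrite (partition_big tt xpredT) //=; apply: eq_bigr => t _.
by rewrite scaler_suml; apply: eq_bigr => s /eqP <-; rewrite htt.
Qed.

Lemma conv_conv_range K (vv : 'I_K -> 'rV[R]_n) :
  conv (conv (range vv)) `<=` conv (range vv).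
Proof.
move=> _ [k [c [l [hc [hl [hs ->]]]]]].
have /choice[mu hmu] := fun i => conv_rangeP (hc i).
exists K, vv, (fun t => \sum_i l i * mu i t); split; first by move=> t; exists t.
split; first by move=> t; apply: sumr_ge0 => i _; rewrite mulr_ge0 //; case: (hmu i).
split.
  rewrite exchange_big /= -hs; apply: eq_bigr => i _.
  by rewrite -mulr_sumr; case: (hmu i) => _ -> _; rewrite mulr1.
transitivity (\sum_i \sum_t (l i * mu i t) *: vv t).
  apply: eq_bigr => i _; case: (hmu i) => _ _ ->.
  by rewrite scaler_sumr; apply: eq_bigr => t _; rewrite scalerA.
by rewrite exchange_big /=; apply: eq_bigr => t _; rewrite scaler_suml.
Qed.

Lemma rat_polytope_conv (P : set 'rV[R]_n) : rat_polytope P -> conv P `<=` P.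
Proof. by move=> [K [vv [_ ->]]]; apply: conv_conv_range. Qed.

Lemma conv_affine m (P : set 'rV[R]_n) (Q : set 'rV[R]_m) (V : 'M[R]_(n, m)) v :
  (forall p, P p -> Q (p *m V + v)) ->
  forall p, conv P p -> conv Q (p *m V + v).
Proof.
move=> PQ _ [k [pts [l [hp [hl [hs ->]]]]]].
exists k, (fun i => pts i *m V + v), l; split; first by move=> i; apply/PQ/hp.
do 2!split => //.
under [RHS]eq_bigr do rewrite scalerDr.
rewrite big_split /= -scaler_suml hs scale1r mulmx_suml; congr (_ + _).
by apply: eq_bigr => i _; rewrite scalemxAl.
Qed.

End ConvexHull.

Section Binarization.
Variable R : realType.

Lemma is_intRP (r : R) : is_intR r <-> r \is a Num.int.
Proof. by split=> [[a ->] | /intrP]. Qed.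

Lemma binary_mxOver_int q (z : 'rV[R]_q) : binary z -> z \is a mxOver Num.int.
Proof. by move=> zb; apply/mxOverP => i j; rewrite [i]ord1; case: (zb j) => ->. Qed.

Lemma mkpt_eta q (p : 'rV[R]_(1 + q)) : p = mkpt (xc p) (zc p).
Proof. by rewrite /mkpt /xc /zc -mx11_scalar hsubmxK. Qed.

Lemma Gamma_binary_section q u (C : set 'rV[R]_(1 + q)) : Gamma u C ->
  exists z : 'I_u.+1 -> 'rV[R]_q, forall j, binary (z j) /\ C (mkpt (j : nat)%:R (z j)).
Proof.
move=> [_ [_ Cbin]].
have /choice[z zP] : forall j : 'I_u.+1, exists z, binary z /\ C (mkpt (j : nat)%:R z).
  move=> j; have [|p [Cp [pb <-]]] := proj2 (Cbin (j : nat)%:R).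
    by exists j; rewrite -ltnS.
  by exists (zc p); rewrite -mkpt_eta.
by exists z.
Qed.

Lemma mkpt_affine q u x (y : 'rV[R]_u) (M : 'M[R]_(u, q)) (c : 'rV[R]_q) :
  mkpt x y *m block_mx 1%:M 0 0 M + row_mx 0 c = mkpt x (y *m M + c).
Proof.
by rewrite /mkpt mul_row_block add_row_mx !mulmx0 mulmx1 !addr0 add0r.
Qed.

End Binarization.

Theorem lemma1 (R : realType) (q u : nat) (hq : (0 < q)%N) (hu : (0 < u)%N)
    (B : set 'rV[R]_(1 + u)) (C : set 'rV[R]_(1 + q)) :
  @unimodular R u B -> @Gamma R q u C ->
  exists (V : 'M[R]_(1 + u, 1 + q)) (v : 'rV[R]_(1 + q)),
    (forall i j, is_intR (V i j)) /\ (forall j, is_intR (v 0 j)) /\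
    (forall p, B p -> C (p *m V + v)).
Proof.
move=> [_ [_ [w [wP [-> [_ detW]]]]]] CG.
have [z zP] := Gamma_binary_section CG.
have eW : \det (diffmx w) = 1 \/ \det (diffmx w) = -1.
  suff -> : diffmx w = (\matrix_(a < u, b < u) (w (lift ord0 b) 0 a - w ord0 0 a))^T.
    by rewrite det_tr.
  by apply/matrixP => a b; rewrite !mxE.
have wZ j : w j \is a mxOver Num.int by apply: binary_mxOver_int; case: (wP j).
have zZ j : z j \is a mxOver Num.int by apply: binary_mxOver_int; case: (zP j).
have [M [c [MZ cZ Mwz]]] := unimodular_affine_interpolation wZ zZ eW.
pose V : 'M[R]_(1 + u, 1 + q) := block_mx 1%:M 0 0 M.
pose v : 'rV[R]_(1 + q) := row_mx 0 c.
have VZ : V \is a mxOver Num.int.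
  by apply: block_mxOver; rewrite ?mxOver_scalar ?mxOver0 ?rpred0 ?rpred1.
have vZ : v \is a mxOver Num.int by apply: row_mxOver; rewrite ?mxOver0 ?rpred0.
exists V, v; split; last split.
- by move=> i j; apply/is_intRP/(mxOverP VZ).
- by move=> j; apply/is_intRP/(mxOverP vZ).
move=> p Bp; apply: (rat_polytope_conv (proj1 CG)).
apply: conv_affine Bp => _ [j ->].
by rewrite mkpt_affine Mwz; case: (zP j).
Qed.
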